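(* Let $F$ be a field of characteristic $2$. Let $\mathcal G$ be the group with presentation $\langle y_1,y_2,\dots \mid y_i^2=1,\ ((y_i,y_j),y_k)=1\ (i,j,k\ge 1)\rangle$, where $(a,b)=a^{-1}b^{-1}ab$, and let $F\mathcal G$ be its group algebra. For $i,j\ge1$ put $d_{ij}=(y_i,y_j)+1\in F\mathcal G$, and let $I$ be the two-sided ideal of $F\mathcal G$ generated by all elements $d_{i_1i_2}d_{i_3i_4}+d_{i_1i_3}d_{i_2i_4}$ with $i_1,i_2,i_3,i_4\ge 1$. Let $\ell>0$ and let $i_1,i_2,\dots,i_{2\ell}$ be pairwise distinct positive integers. Then \[ \bigl((y_{i_1},y_{i_2})+1\bigr)\bigl((y_{i_3},y_{i_4})+1\bigr)\cdots\bigl((y_{i_{2\ell-1}},y_{i_{2\ell}})+1\bigr)\notin I. \] *)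

From HB Require Import structures.
From mathcomp Require Import all_boot all_algebra.
From Stdlib Require Import ClassicalEpsilon.
Set Implicit Arguments. Unset Strict Implicit. Unset Printing Implicit Defensive.
Import GRing.Theory.
Local Open Scope ring_scope.

Record grp := Grp {
  gT :> Type;
  gmul : gT -> gT -> gT;
  ginv : gT -> gT;
  gone : gT;
  gmulA : forall a b c, gmul a (gmul b c) = gmul (gmul a b) c;
  gmul1g : forall a, gmul gone a = a;
  gmulVg : forall a, gmul (ginv a) a = gone }.

Definition gcomm (G : grp) (a b : G) : G :=
  gmul (gmul (gmul (ginv a) (ginv b)) a) b.

(* the defining relations of the presentation, for a family of generators
   indexed by the positive integers (index 0 is ignored) *)
Definition rels (G : grp) (y : nat -> G) : Prop :=
  (forall i, (0 < i)%N -> gmul (y i) (y i) = gone G) /\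
  (forall i j k, (0 < i)%N -> (0 < j)%N -> (0 < k)%N ->
     gcomm (gcomm (y i) (y j)) (y k) = gone G).

Definition gword (G : grp) (y : nat -> G) (w : seq (nat * bool)) : G :=
  foldr (fun p acc => gmul (if p.2 then ginv (y p.1) else y p.1) acc) (gone G) w.

Definition is_presented_group (G : grp) (y : nat -> G) : Prop :=
  rels y /\
  (forall g : G, exists w : seq (nat * bool),
       all (fun p => (0 < p.1)%N) w /\ g = gword y w) /\
  (forall (H : grp) (h : nat -> H), rels h ->
     exists f : G -> H, (forall a b, f (gmul a b) = gmul (f a) (f b)) /\
                        (forall i, (0 < i)%N -> f (y i) = h i)).

(* ---------- the group algebra F G ----------
   An element of F G is represented by a finite formal sum
   sum_k c_k g_k, i.e. a list of pairs (c_k, g_k); two representatives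
   denote the same element iff they have the same coefficient function. *)
Definition gdec (G : grp) (a b : G) : bool :=
  if excluded_middle_informative (a = b) then true else false.

Definition fs (F : fieldType) (G : grp) := seq (F * G).

Definition fs_coef (F : fieldType) (G : grp) (x : fs F G) (z : G) : F :=
  \sum_(p <- x) (if gdec p.2 z then p.1 else 0).

Definition fs_eq (F : fieldType) (G : grp) (x x' : fs F G) : Prop :=
  forall z, fs_coef x z = fs_coef x' z.

Definition fs_add (F : fieldType) (G : grp) (x x' : fs F G) : fs F G := x ++ x'.

Definition fs_mul (F : fieldType) (G : grp) (x x' : fs F G) : fs F G :=
  [seq (p.1 * q.1, gmul p.2 q.2) | p <- x, q <- x'].

Definition fs_scale (F : fieldType) (G : grp) (c : F) (x : fs F G) : fs F G :=
  [seq (c * p.1, p.2) | p <- x].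

Definition fs_of (F : fieldType) (G : grp) (g : G) : fs F G := [:: (1, g)].

Definition fs_one (F : fieldType) (G : grp) : fs F G := fs_of F (gone G).

Definition dd (F : fieldType) (G : grp) (y : nat -> G) (i j : nat) : fs F G :=
  fs_add (fs_of F (gcomm (y i) (y j))) (fs_one F G).

Definition Igen (F : fieldType) (G : grp) (y : nat -> G)
    (i1 i2 i3 i4 : nat) : fs F G :=
  fs_add (fs_mul (dd F y i1 i2) (dd F y i3 i4))
         (fs_mul (dd F y i1 i3) (dd F y i2 i4)).

(* membership in the two-sided ideal I generated by all Igen with indices
   >= 1: x is an F-linear combination of elements g * r * h with g, h in G
   and r a generator (this is exactly the set of finite sums
   sum a_k r_k b_k, a_k, b_k in F G). *)
Definition in_I (F : fieldType) (G : grp) (y : nat -> G) (x : fs F G) : Prop :=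
  exists L : seq (F * G * (nat * nat * nat * nat) * G),
    all (fun t => [&& (0 < t.1.2.1.1.1)%N, (0 < t.1.2.1.1.2)%N,
                      (0 < t.1.2.1.2)%N & (0 < t.1.2.2)%N]) L /\
    fs_eq x (flatten [seq fs_scale t.1.1.1
               (fs_mul (fs_mul (fs_of F t.1.1.2)
                  (Igen F y t.1.2.1.1.1 t.1.2.1.1.2 t.1.2.1.2 t.1.2.2))
                  (fs_of F t.2)) | t <- L]).

(* the product d_{i_1 i_2} d_{i_3 i_4} ... d_{i_{2l-1} i_{2l}}, where the
   indices are given as idx 0, idx 1, ..., idx (2l-1) *)
Definition dprod (F : fieldType) (G : grp) (y : nat -> G) (idx : nat -> nat)
    (l : nat) : fs F G :=
  foldr (fun k acc => fs_mul (dd F y (idx k.*2) (idx k.*2.+1)) acc)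
        (fs_one F G) (iota 0 l).

From HB Require Import structures.
From mathcomp Require Import all_boot all_algebra.
From mathcomp Require Import ring.
From Stdlib Require Import ClassicalEpsilon.
Set Implicit Arguments. Unset Strict Implicit. Unset Printing Implicit Defensive.
Import GRing.Theory.
Local Open Scope ring_scope.

(* Put n = 2l and let H be the group of pairs (a, q) in F_2^n x M_n(F_2) with
   (a, q)(b, r) = (a + b, q + r + triu(a^T b)), triu keeping the entries above
   the diagonal.  Its commutators (0, triu(a^T b) + triu(b^T a)) are central, so
   y_(idx i) |-> (e_i, 0) and y_k |-> 1 otherwise defines a morphism f : G -> H.
   In the group algebra F[F_2^n] the elements t_i = e_i + 1 have t_i^2 = 0, so
   q |-> prod (1 + t_i t_j)^(q_ij) is a morphism from the centre {(0, q)} of H to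
   the units.  Extended by 0 off the centre and then linearly along f, it gives a
   map F G -> F[F_2^n] that is linear over central elements and sends
   d_(idx i)(idx j) to t_i t_j.  Hence it sends each generator of I to
   t_a t_b t_c t_d + t_a t_c t_b t_d = 0 and kills I, but it sends the product of
   the d's to t_1 ... t_n, which is the sum of all elements of F_2^n. *)

Section GrpTheory.
Variable G : grp.
Implicit Types a b : G.

Lemma gmul_idem a : gmul a a = a -> a = gone G.
Proof. by move=> aa; rewrite -(gmulVg a) -{3}aa gmulA gmulVg gmul1g. Qed.

Lemma gmulgV a : gmul a (ginv a) = gone G.
Proof.
by apply: gmul_idem; rewrite -gmulA [gmul (ginv a) (gmul a _)]gmulA gmulVg gmul1g.
Qed.

Lemma gmulg1 a : gmul a (gone G) = a.
Proof. by rewrite -(gmulVg a) gmulA gmulgV gmul1g. Qed.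

Lemma gmul_eq1 a b : gmul a b = gone G -> a = ginv b.
Proof. by move=> ab; rewrite -[a]gmulg1 -(gmulgV b) gmulA ab gmul1g. Qed.

End GrpTheory.

Section GrpMorphism.
Variables (G H : grp) (f : G -> H).
Hypothesis fM : forall a b, f (gmul a b) = gmul (f a) (f b).

Lemma gmorph1 : f (gone G) = gone H.
Proof. by apply: gmul_idem; rewrite -fM gmul1g. Qed.

Lemma gmorphV a : f (ginv a) = ginv (f a).
Proof. by apply: gmul_eq1; rewrite -fM gmulVg gmorph1. Qed.

Lemma gmorph_comm a b : f (gcomm a b) = gcomm (f a) (f b).
Proof. by rewrite /gcomm !fM !gmorphV. Qed.

End GrpMorphism.

Section Heisenberg.
Variables (K : comNzRingType) (n : nat).

Definition triu_outer (u v : 'rV[K]_n) : 'M[K]_n :=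
  \matrix_(i, j) ((i < j)%N%:R * (u 0 i * v 0 j)).

Local Notation H := ('rV[K]_n * 'M[K]_n)%type.

Definition heis_mul (x y : H) : H := (x.1 + y.1, x.2 + y.2 + triu_outer x.1 y.1).
Definition heis_inv (x : H) : H := (- x.1, triu_outer x.1 x.1 - x.2).

Lemma heis_mulA (x y z : H) : heis_mul x (heis_mul y z) = heis_mul (heis_mul x y) z.
Proof. by congr pair; apply/matrixP => i j; rewrite !mxE; ring. Qed.

Lemma heis_mul1 (x : H) : heis_mul (0, 0) x = x.
Proof. by case: x => a q; congr pair; apply/matrixP => i j; rewrite !mxE; ring. Qed.

Lemma heis_mulV (x : H) : heis_mul (heis_inv x) x = (0, 0).
Proof. by congr pair; apply/matrixP => i j; rewrite !mxE; ring. Qed.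

Definition heis : grp := Grp heis_mulA heis_mul1 heis_mulV.

Lemma triu_outer0l v : triu_outer 0 v = 0.
Proof. by apply/matrixP => i j; rewrite !mxE mul0r mulr0. Qed.

Lemma triu_outer0r u : triu_outer u 0 = 0.
Proof. by apply/matrixP => i j; rewrite !mxE !mulr0. Qed.

Lemma triu_outer_delta (i j : 'I_n) :
  triu_outer (delta_mx 0 i) (delta_mx 0 j) = (i < j)%N%:R *: delta_mx i j.
Proof.
apply/matrixP => a b; rewrite !mxE /=.
by have [->|_] := eqVneq a i; have [->|_] := eqVneq b j; rewrite ?(mulr0, mul0r, mulr1).
Qed.

Lemma heis_commE (x y : heis) :
  gcomm x y = (0, triu_outer x.1 y.1 - triu_outer y.1 x.1).
Proof. by rewrite /gcomm /=; congr pair; apply/matrixP => i j; rewrite !mxE; ring. Qed.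

Lemma heis_mul_centralr (x : heis) q : gmul x ((0, q) : heis) = (x.1, x.2 + q).
Proof. by congr pair; apply/matrixP => i j; rewrite !mxE; ring. Qed.

Lemma heis_mul_central (x : heis) q : gmul x ((0, q) : heis) = gmul ((0, q) : heis) x.
Proof. by congr pair; apply/matrixP => i j; rewrite !mxE; ring. Qed.

End Heisenberg.

Section GroupAlgebra.
Variables (R : comNzRingType) (V : finZmodType).

(* Only the module structure of {ffun V -> R^o} is copied: its canonical ring
   structure is the pointwise one, while galg gets the convolution product. *)
Definition galg := {ffun V -> R^o}.
HB.instance Definition _ := GRing.Lmodule.copy galg {ffun V -> R^o}.

Implicit Types f g h : galg.

Definition galg_mul f g : galg := [ffun v => \sum_u f u * g (v - u)].
Definition galg_one : galg := [ffun v => (v == 0)%:R].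

Lemma galg_mulA : associative galg_mul.
Proof.
move=> f g h; apply/ffunP => v; rewrite !ffunE.
under eq_bigr => u _ do rewrite ffunE big_distrr (reindex_inj (subIr u)) /=.
under [RHS]eq_bigr => u _ do rewrite ffunE big_distrl.
rewrite exchange_big /=; apply: eq_bigr => u _; apply: eq_bigr => w _.
by rewrite mulrA opprB addrA subrK.
Qed.

Lemma galg_mulC : commutative galg_mul.
Proof.
move=> f g; apply/ffunP => v; rewrite !ffunE (reindex_inj (subrI v)) /=.
by apply: eq_bigr => u _; rewrite subKr mulrC.
Qed.

Lemma galg_mul1 : left_id galg_one galg_mul.
Proof.
move=> f; apply/ffunP => v; rewrite ffunE (bigD1 0) //= big1 => [|u /negbTE u0].
  by rewrite ffunE eqxx mul1r subr0 addr0.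
by rewrite ffunE u0 mul0r.
Qed.

Lemma galg_mulDl : left_distributive galg_mul +%R.
Proof.
move=> f g h; apply/ffunP => v; rewrite !ffunE -big_split /=.
by apply: eq_bigr => u _; rewrite ffunE mulrDl.
Qed.

Lemma galg_one_neq0 : galg_one != 0.
Proof. by apply/eqP => /ffunP/(_ 0)/eqP; rewrite !ffunE eqxx oner_eq0. Qed.

HB.instance Definition _ := GRing.Zmodule_isComNzRing.Build galg
  galg_mulA galg_mulC galg_mul1 galg_mulDl galg_one_neq0.

Lemma galg_scaleE (a : R) f v : (a *: f) v = a * f v.
Proof. by rewrite ffunE. Qed.

Lemma galg_scalerAl (a : R) f g : a *: (f * g) = (a *: f) * g.
Proof.
apply/ffunP => v; rewrite galg_scaleE !ffunE big_distrr /=.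
by apply: eq_bigr => u _; rewrite galg_scaleE mulrA.
Qed.

HB.instance Definition _ := GRing.Lmodule_isLalgebra.Build R galg galg_scalerAl.
HB.instance Definition _ := GRing.Lalgebra_isComAlgebra.Build R galg.

Lemma galg_mulE f g v : (f * g) v = \sum_u f u * g (v - u).
Proof. by rewrite ffunE. Qed.

Lemma galg_oneE v : (1 : galg) v = (v == 0)%:R.
Proof. by rewrite ffunE. Qed.

Lemma pchar_galg p : p \in [pchar R] -> p \in [pchar galg].
Proof. by rewrite !inE => /andP[-> /eqP p0]; rewrite -scaler_nat p0 scale0r eqxx. Qed.

Definition gelt u : galg := [ffun v => (v == u)%:R].

Lemma geltE u v : gelt u v = (v == u)%:R.
Proof. by rewrite ffunE. Qed.

Lemma gelt0 : gelt 0 = 1.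
Proof. by apply/ffunP => v; rewrite galg_oneE. Qed.

Lemma mul_geltE u f v : (gelt u * f) v = f (v - u).
Proof.
rewrite galg_mulE (bigD1 u) //= big1 => [|w /negbTE wu].
  by rewrite geltE eqxx mul1r addr0.
by rewrite geltE wu mul0r.
Qed.

Lemma geltD u w : gelt u * gelt w = gelt (u + w).
Proof. by apply/ffunP => v; rewrite mul_geltE !geltE subr_eq addrC. Qed.

Definition tau u := gelt u + 1.

Lemma mul_tauE u f v : (tau u * f) v = f (v - u) + f v.
Proof. by rewrite mulrDl mul1r ffunE mul_geltE. Qed.

Section Char2.
Hypotheses (R2 : 2 \in [pchar R]) (V2 : forall v : V, v + v = 0).

Lemma tau0 : tau 0 = 0.
Proof. by rewrite /tau gelt0 (addrr_pchar2 (pchar_galg R2)). Qed.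

Lemma tau_sqr u : tau u * tau u = 0.
Proof.
rewrite mulrDl !mulrDr geltD V2 gelt0 !mulr1 mul1r [gelt u + 1]addrC.
exact: (addrr_pchar2 (pchar_galg R2)).
Qed.

End Char2.
End GroupAlgebra.

Section FormalSums.
Variables (F : fieldType) (G : grp).
Implicit Types (x : fs F G) (g h : G).

Lemma gdecP g h : reflect (g = h) (gdec g h).
Proof. by rewrite /gdec; case: excluded_middle_informative => gh; constructor. Qed.

HB.instance Definition _ := hasDecEq.Build G gdecP.

Lemma gdecE g h : gdec g h = (g == h).
Proof. by []. Qed.

Section Linear.
Variables (V : lmodType F) (chi : G -> V).

Definition fs_lin x : V := \sum_(p <- x) p.1 *: chi p.2.

Lemma fs_lin_add x x' : fs_lin (fs_add x x') = fs_lin x + fs_lin x'.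
Proof. exact: big_cat. Qed.

Lemma fs_lin_scale c x : fs_lin (fs_scale c x) = c *: fs_lin x.
Proof.
by rewrite /fs_lin big_map scaler_sumr; apply: eq_bigr => p _; rewrite scalerA.
Qed.

Lemma fs_lin_flatten xs : fs_lin (flatten xs) = \sum_(x <- xs) fs_lin x.
Proof. exact: big_flatten. Qed.

Lemma fs_lin_of g : fs_lin (fs_of F g) = chi g.
Proof. by rewrite /fs_lin big_seq1 scale1r. Qed.

Lemma fs_lin_coef x (S : seq G) : uniq S -> {subset unzip2 x <= S} ->
  fs_lin x = \sum_(z <- S) fs_coef x z *: chi z.
Proof.
move=> uS xS; rewrite /fs_lin /fs_coef.
under [RHS]eq_bigr do rewrite scaler_suml.
rewrite exchange_big /=; apply: eq_big_seq => p px.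
rewrite (bigD1_seq p.2) ?xS ?map_f //= gdecE eqxx big1 ?addr0 // => z zp.
by rewrite gdecE eq_sym (negbTE zp) scale0r.
Qed.

Lemma fs_lin_eq x x' : fs_eq x x' -> fs_lin x = fs_lin x'.
Proof.
move=> eqx; set S := undup (unzip2 (x ++ x')).
have [xS x'S] : {subset unzip2 x <= S} /\ {subset unzip2 x' <= S}.
  by split=> z zx; rewrite mem_undup /unzip2 map_cat mem_cat zx ?orbT.
rewrite (fs_lin_coef (undup_uniq _) xS) (fs_lin_coef (undup_uniq _) x'S).
by apply: eq_bigr => z _; rewrite eqx.
Qed.

Lemma fs_lin_in_I (y : nat -> G) x :
  (forall g h a b c d, (0 < a)%N -> (0 < b)%N -> (0 < c)%N -> (0 < d)%N ->
     fs_lin (fs_mul (fs_mul (fs_of F g) (Igen F y a b c d)) (fs_of F h)) = 0) ->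
  in_I y x -> fs_lin x = 0.
Proof.
move=> lin0 [L [Lpos /fs_lin_eq ->]].
rewrite fs_lin_flatten big_map big1_seq // => t /andP[_ /(allP Lpos)].
by case/and4P => *; rewrite fs_lin_scale lin0 ?scaler0.
Qed.

End Linear.

Section Multiplicative.
Variables (A : algType F) (chi : G -> A) (Z : pred G).
Hypothesis ZM : forall g h, Z g -> Z h -> Z (gmul g h).
Hypothesis chi_central :
  forall g h z, Z z -> chi (gmul (gmul g z) h) = chi (gmul g h) * chi z.

Lemma chi_mulr g z : Z z -> chi (gmul g z) = chi g * chi z.
Proof. by move=> Zz; rewrite -[gmul g z]gmulg1 chi_central // gmulg1. Qed.

Lemma all_fs_mul x x' :
  all (Z \o snd) x -> all (Z \o snd) x' -> all (Z \o snd) (fs_mul x x').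
Proof.
move=> /allP Zx /allP Zx'; apply/allP => _ /allpairsP[[p q] [px qx ->]] /=.
exact: ZM (Zx _ px) (Zx' _ qx).
Qed.

Lemma fs_lin_mulr x x' : all (Z \o snd) x' ->
  fs_lin chi (fs_mul x x') = fs_lin chi x * fs_lin chi x'.
Proof.
move=> /allP Zx'; rewrite /fs_lin big_allpairs_dep mulr_suml; apply: eq_bigr => p _.
rewrite mulr_sumr; apply: eq_big_seq => q qx' /=.
rewrite chi_mulr; last exact: Zx'.
by rewrite -scalerAl -scalerAr scalerA.
Qed.

Lemma fs_lin_sandwich g h r : all (Z \o snd) r ->
  fs_lin chi (fs_mul (fs_mul (fs_of F g) r) (fs_of F h)) = chi (gmul g h) * fs_lin chi r.
Proof.
move=> /allP Zr; rewrite /fs_mul allpairs1l allpairs1r /fs_lin !big_map mulr_sumr.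
apply: eq_big_seq => q qr /=.
rewrite mul1r mulr1 chi_central; last exact: Zr.
by rewrite scalerAr.
Qed.

End Multiplicative.
End FormalSums.

Lemma big_nat_double (R : Type) (idx : R) (op : Monoid.law idx) (F : nat -> R) l :
  \big[op/idx]_(0 <= k < l) op (F k.*2) (F k.*2.+1) = \big[op/idx]_(0 <= i < l.*2) F i.
Proof.
elim: l => [|l IH]; first by rewrite !big_geq.
by rewrite doubleS !big_nat_recr //= IH Monoid.mulmA.
Qed.

Lemma oppmx_F2 m p (M : 'M['F_2]_(m, p)) : - M = M.
Proof. by apply/matrixP => i j; rewrite mxE (oppr_pchar2 (pchar_Fp (isT : prime 2))). Qed.

Lemma addmx_F2 m p (M : 'M['F_2]_(m, p)) : M + M = 0.
Proof. by rewrite -{1}(oppmx_F2 M) addNr. Qed.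

Lemma F2_cases (x : 'F_2) : x = 0 \/ x = 1.
Proof. by case: x => [[|[|//]] ?]; [left | right]; apply/val_inj. Qed.

Lemma exprF2D (R : nzRingType) (m : R) (x y : 'F_2) :
  m * m = 1 -> m ^+ (x + y)%R = m ^+ x * m ^+ y.
Proof.
by case: x y => [[|[|//]] ?] [[|[|//]] ?] mm /=; rewrite ?mulr1 ?mul1r ?expr0 ?expr1.
Qed.

Section CentreRepresentation.
Variables (n : nat) (F : fieldType).
Hypothesis F2 : 2 \in [pchar F].

Local Notation W := 'rV['F_2]_n.
Local Notation A := (galg F W).
Local Notation H := (heis 'F_2 n).

Let A2 : 2 \in [pchar A] := pchar_galg W F2.

Lemma tauW_sqr (u : W) : tau F u * tau F u = 0.
Proof. exact: tau_sqr F2 (@addmx_F2 1 n) u. Qed.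

Lemma tauW0 : tau F (0 : W) = 0.
Proof. exact: tau0. Qed.

Definition taud (i : 'I_n) : A := tau F (delta_mx 0 i).
Definition mu (i j : 'I_n) : A := 1 + taud i * taud j.
(* The entries of q, read as the naturals 0 and 1, are used as exponents. *)
Definition rho (q : 'M['F_2]_n) : A := \prod_(p : 'I_n * 'I_n) mu p.1 p.2 ^+ q p.1 p.2.
Definition phi (x : H) : A := if x.1 == 0 then rho x.2 else 0.

Lemma mu_sqr i j : mu i j * mu i j = 1.
Proof.
rewrite /mu; set t := taud i * taud j.
have -> : (1 + t) * (1 + t) = 1 + (t + t) + t * t by ring.
by rewrite (addrr_pchar2 A2) /t mulrACA !tauW_sqr mulr0 !addr0.
Qed.

Lemma rhoD q r : rho (q + r) = rho q * rho r.
Proof.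
by rewrite /rho -big_split; apply: eq_bigr => p _; rewrite mxE exprF2D // mu_sqr.
Qed.

Lemma rho0 : rho 0 = 1.
Proof. by rewrite /rho big1 // => p _; rewrite mxE expr0. Qed.

Lemma rho_delta i j : rho (delta_mx i j) = mu i j.
Proof.
rewrite /rho (bigD1 (i, j)) //= big1 => [|[a b] /=]; last first.
  by rewrite xpair_eqE mxE => /negbTE ->; rewrite expr0.
by rewrite mxE !eqxx expr1 mulr1.
Qed.

Lemma rho_triu_delta i j :
  rho (triu_outer (delta_mx 0 i) (delta_mx 0 j)) = if (i < j)%N then mu i j else 1.
Proof. by rewrite triu_outer_delta; case: ltnP => _; rewrite ?scale1r ?scale0r ?rho_delta ?rho0. Qed.

Lemma rho_comm_delta i j :
  rho (triu_outer (delta_mx 0 i) (delta_mx 0 j) - triu_outer (delta_mx 0 j) (delta_mx 0 i))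
  = 1 + taud i * taud j.
Proof.
rewrite oppmx_F2 rhoD !rho_triu_delta /mu.
case: ltngtP => [_|_|/val_inj ->]; first exact: mulr1.
  by rewrite mul1r mulrC.
by rewrite mulr1 tauW_sqr addr0.
Qed.

Lemma phi_central q : phi (0, q) = rho q.
Proof. by rewrite /phi eqxx. Qed.

Lemma phi_mul_central (x y : H) q :
  phi (gmul (gmul x ((0, q) : H)) y) = phi (gmul x y) * rho q.
Proof.
rewrite -gmulA -heis_mul_central gmulA heis_mul_centralr /phi /=.
by case: eqP => _; rewrite ?rhoD ?mul0r.
Qed.

Definition supp_lt k (w : W) := [forall i : 'I_n, (k <= i)%N ==> (w 0 i == 0)].

Lemma supp_lt0 w : supp_lt 0 w = (w == 0).
Proof.
apply/forallP/eqP => [w0 | -> i]; last by rewrite mxE eqxx implybT.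
by apply/rowP => i; rewrite mxE; exact/eqP/(implyP (w0 i)).
Qed.

Lemma supp_lt_split k (kn : (k < n)%N) w :
  supp_lt k w = (w 0 (Ordinal kn) == 0) && supp_lt k.+1 w.
Proof.
apply/forallP/andP => [h | [wk /forallP h] i].
  split; first exact: implyP (h (Ordinal kn)) (leqnn k).
  by apply/forallP => i; apply/implyP => ki; exact: implyP (h i) (ltnW ki).
apply/implyP; rewrite leq_eqVlt => /orP[/eqP ki | ki]; last exact: implyP (h i) ki.
by have -> : i = Ordinal kn by apply/val_inj.
Qed.

Lemma supp_ltS_sub k (kn : (k < n)%N) w :
  supp_lt k.+1 (w - delta_mx 0 (Ordinal kn)) = supp_lt k.+1 w.
Proof.
apply: eq_forallb => i; case: leqP => ki; rewrite ?implyTb ?implyFb //.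
have ik : (i == Ordinal kn) = false by rewrite -val_eqE gtn_eqF.
by rewrite !mxE eqxx ik subr0.
Qed.

Lemma prod_taudE k : (k <= n)%N -> forall w : W,
  (\prod_(i < n | (i < k)%N) taud i) w = (supp_lt k w)%:R.
Proof.
elim: k => [_ w | k IH kn w].
  by rewrite big_pred0 => [|i]; rewrite ?galg_oneE ?supp_lt0 ?ltn0.
rewrite (bigD1 (Ordinal kn)) // (eq_bigl (fun i : 'I_n => (i < k)%N)) => [|i]; last first.
  by rewrite ltnS ltn_neqAle andbC -val_eqE.
rewrite mul_tauE !(IH (ltnW kn)) !(supp_lt_split kn) supp_ltS_sub !mxE !eqxx /=.
have [->|->] := F2_cases (w 0 (Ordinal kn)).
  by rewrite sub0r oppr_eq0 oner_eq0 eqxx andFb andTb add0r.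
by rewrite subrr eqxx oner_eq0 andFb andTb addr0.
Qed.

Lemma prod_taud_neq0 : \prod_(i < n) taud i != 0.
Proof.
have supp0 : supp_lt n 0 by apply/forallP => i; rewrite mxE eqxx implybT.
apply/eqP => /ffunP/(_ 0); rewrite ffunE.
rewrite (eq_bigl (fun i : 'I_n => (i < n)%N)) => [|i]; last by rewrite ltn_ord.
rewrite (prod_taudE (leqnn n)) supp0 => /eqP; apply/negP; exact: oner_neq0.
Qed.

Section Generators.
Variable idx : nat -> nat.
Hypothesis idx_inj : forall i j : 'I_n, idx i = idx j -> i = j.

Definition genv k : W := \row_i (idx i == k)%:R.
Definition gen k : H := (genv k, 0).

Lemma genv_idx (i : 'I_n) : genv (idx i) = delta_mx 0 i.
Proof.
apply/rowP => j; rewrite !mxE eqxx /=.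
by rewrite (inj_eq idx_inj).
Qed.

Lemma genv_cases k : genv k = 0 \/ exists i, genv k = delta_mx 0 i.
Proof.
case: (pickP (fun i : 'I_n => idx i == k)) => [i /eqP <-| none].
  by right; exists i; rewrite genv_idx.
by left; apply/rowP => j; rewrite !mxE none.
Qed.

Lemma triu_outer_genv k : triu_outer (genv k) (genv k) = 0.
Proof.
by case: (genv_cases k) => [->|[i ->]]; rewrite ?triu_outer0l // triu_outer_delta ltnn scale0r.
Qed.

Lemma gen_rels : rels gen.
Proof.
split=> [k _ | i j k _ _ _]; last first.
  by rewrite !heis_commE /= triu_outer0l triu_outer0r subrr.
by congr pair; rewrite /= addmx_F2 ?add0r ?triu_outer_genv.
Qed.

Lemma phi_comm_gen a b : phi (gcomm (gen a) (gen b)) = 1 + tau F (genv a) * tau F (genv b).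
Proof.
rewrite heis_commE phi_central /=.
case: (genv_cases a) => [->|[i ->]].
  by rewrite triu_outer0l triu_outer0r subrr rho0 tauW0 mul0r addr0.
case: (genv_cases b) => [->|[j ->]].
  by rewrite triu_outer0l triu_outer0r subrr rho0 tauW0 mulr0 addr0.
exact: rho_comm_delta.
Qed.

Section Presentation.
Variables (G : grp) (y : nat -> G) (f : G -> H).
Hypothesis fM : forall a b, f (gmul a b) = gmul (f a) (f b).
Hypothesis fy : forall k, (0 < k)%N -> f (y k) = gen k.

Definition chi (g : G) : A := phi (f g).
Definition fcentral (g : G) := (f g).1 == 0.

Lemma fcentralM g h : fcentral g -> fcentral h -> fcentral (gmul g h).
Proof. by rewrite /fcentral fM /= => /eqP-> /eqP->; rewrite addr0. Qed.

Lemma chi_central g h z : fcentral z -> chi (gmul (gmul g z) h) = chi (gmul g h) * chi z.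
Proof.
rewrite /fcentral /chi !fM => /eqP z0.
have -> : f z = (0, (f z).2) by move: z0; case: (f z) => ? ? /= ->.
by rewrite phi_mul_central phi_central.
Qed.

Lemma fs_lin_dd a b : (0 < a)%N -> (0 < b)%N ->
  all (fcentral \o snd) (dd F y a b) /\ fs_lin chi (dd F y a b) = tau F (genv a) * tau F (genv b).
Proof.
move=> a0 b0; have fcomm : f (gcomm (y a) (y b)) = gcomm (gen a) (gen b).
  by rewrite (gmorph_comm fM) !fy.
split; first by rewrite /= /fcentral fcomm (gmorph1 fM) heis_commE !eqxx.
rewrite fs_lin_add !fs_lin_of /chi fcomm phi_comm_gen (gmorph1 fM) phi_central rho0.
by rewrite addrAC (addrr_pchar2 A2) add0r.
Qed.

Lemma fs_lin_Igen a b c d : (0 < a)%N -> (0 < b)%N -> (0 < c)%N -> (0 < d)%N ->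
  all (fcentral \o snd) (Igen F y a b c d) /\ fs_lin chi (Igen F y a b c d) = 0.
Proof.
move=> a0 b0 c0 d0.
have [[ab lab] [cd lcd]] := (fs_lin_dd a0 b0, fs_lin_dd c0 d0).
have [[ac lac] [bd lbd]] := (fs_lin_dd a0 c0, fs_lin_dd b0 d0).
split; first by rewrite all_cat !(all_fs_mul fcentralM).
rewrite fs_lin_add !(fs_lin_mulr chi_central) // lab lcd lac lbd.
by rewrite [X in _ + X]mulrACA (addrr_pchar2 A2).
Qed.

Lemma fs_lin_foldr_dd (js : seq nat) :
  (forall k, k \in js -> (0 < idx k.*2)%N && (0 < idx k.*2.+1)%N) ->
  let x := foldr (fun k acc => fs_mul (dd F y (idx k.*2) (idx k.*2.+1)) acc) (fs_one F G) js in
  all (fcentral \o snd) x /\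
  fs_lin chi x = \prod_(k <- js) (tau F (genv (idx k.*2)) * tau F (genv (idx k.*2.+1))) :> A.
Proof.
elim: js => [_ | k js IH pos] /=.
  by rewrite /fcentral (gmorph1 fM) /= eqxx big_nil fs_lin_of /chi (gmorph1 fM) phi_central rho0.
have /andP[k0 k1] := pos k (mem_head k js).
have [cjs ljs] := IH (fun j jjs => pos j (mem_behead (s := k :: js) jjs)).
have [ck lk] := fs_lin_dd k0 k1.
by rewrite (all_fs_mul fcentralM) // (fs_lin_mulr chi_central) // lk ljs big_cons.
Qed.

Lemma fs_lin_dprod l : (forall k, (k < l.*2)%N -> (0 < idx k)%N) ->
  fs_lin chi (dprod F y idx l) = \prod_(0 <= i < l.*2) tau F (genv (idx i)).
Proof.
move=> hpos; have pos k : k \in iota 0 l -> (0 < idx k.*2)%N && (0 < idx k.*2.+1)%N.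
  by rewrite mem_iota add0n => kl; rewrite !hpos ?ltn_double ?ltn_Sdouble.
have [_ ->] := fs_lin_foldr_dd pos.
by rewrite -(@big_nat_double _ _ _ (fun i => tau F (genv (idx i)))) /index_iota subn0.
Qed.

End Presentation.
End Generators.
End CentreRepresentation.

Theorem corollary2p7 (F : fieldType) (H2 : 2%N \in [pchar F])
  (G : grp) (y : nat -> G) (HG : is_presented_group y)
  (l : nat) (hl : (0 < l)%N) (idx : nat -> nat)
  (hpos : forall k, (k < l.*2)%N -> (0 < idx k)%N)
  (hdist : forall k k', (k < l.*2)%N -> (k' < l.*2)%N -> idx k = idx k' -> k = k') :
  ~ in_I y (dprod F y idx l).
Proof.
move=> HI; set n := l.*2.
have idx_inj (i j : 'I_n) : idx i = idx j -> i = j.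
  by move=> /(hdist _ _ (ltn_ord i) (ltn_ord j)) /val_inj.
have [_ [_ /(_ _ _ (gen_rels idx_inj))[f [fM fy]]]] := HG.
have : fs_lin (chi F f) (dprod F y idx l) = 0.
  apply: fs_lin_in_I HI => g h a b c d a0 b0 c0 d0.
  have [central_Igen lin_Igen] := fs_lin_Igen H2 idx_inj fM fy a0 b0 c0 d0.
  by rewrite (fs_lin_sandwich (chi_central H2 fM) g h central_Igen) lin_Igen mulr0.
rewrite (fs_lin_dprod H2 idx_inj fM fy hpos) big_mkord.
under eq_bigr => i _ do rewrite genv_idx //.
by move/eqP; rewrite (negbTE (prod_taud_neq0 n F)).
Qed.
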